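(* Let $n$ be an odd integer with $7\le n\le 99$ and $n\neq 9$. Then the cycle $C_{2n}$ admits an optimal extended irregular dominating set.
   Context: $C_m$ is the cycle on $m$ vertices. In a finite simple graph $\Gamma=(V,E)$ with distance $d$, a vertex $v$ carrying a non-negative integer label $\ell$ dominates (covers) exactly the vertices $u$ with $d(u,v)=\ell$; a vertex labeled $0$ dominates only itself. For $k\ge0$, a $k$-extended irregular dominating set is a set $S\subseteq V$ of $k$ vertices with a labeling $\lambda:S\to\mathbb{Z}_{\ge0}$ with distinct labels, such that every vertex of $V$ is dominated by some vertex of $S$; it is assumed that some vertex of $S$ has label $0$. $\gamma_e(\Gamma)$ is the minimum cardinality of such a set; a $k$-extended irregular dominating set is optimal if $k=\gamma_e(\Gamma)$. *)

From mathcomp Require Import all_boot.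
Set Implicit Arguments. Unset Strict Implicit. Unset Printing Implicit Defensive.

(* A finite simple graph is given by a (symmetric, irreflexive) relation e on a finType. *)

Definition walk_len (T : finType) (e : rel T) (u v : T) (k : nat) : bool :=
  [exists p : k.-tuple T, path e u p && (last u p == v)].

Definition is_dist (T : finType) (e : rel T) (u v : T) (l : nat) : Prop :=
  walk_len e u v l /\ forall k, k < l -> ~~ walk_len e u v k.

Definition cycle_rel (m : nat) : rel 'I_m :=
  fun u v => (val v == u.+1 %% m) || (val u == v.+1 %% m).

Definition dominates (T : finType) (e : rel T) (v : T) (l : nat) (u : T) : Prop :=
  is_dist e u v l.

Definition ext_irr_dom (T : finType) (e : rel T) (S : {set T}) (lam : T -> nat) : Prop :=
  {in S &, injective lam} /\
  (exists2 v, v \in S & lam v = 0) /\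
  (forall u : T, exists2 v, v \in S & dominates e v (lam v) u).

Definition optimal_ext_irr_dom (T : finType) (e : rel T) (S : {set T}) (lam : T -> nat) : Prop :=
  ext_irr_dom e S lam /\
  (forall (S' : {set T}) (lam' : T -> nat), ext_irr_dom e S' lam' -> #|S| <= #|S'|).

From mathcomp Require Import all_boot zify.
Set Implicit Arguments. Unset Strict Implicit. Unset Printing Implicit Defensive.

(* In a cycle, a vertex labelled l dominates only the vertices at cyclic offset
   +l and -l, and a vertex labelled 0 only itself; so every extended irregular
   dominating set S of C_m has m <= 2|S| - 1, and on C_(2n) any such set with
   n + 1 vertices is optimal. For each n in range, a labelling of n + 1 vertices
   of C_(2n) by 0, 1, ..., n, found by computer search, is checked by evaluation. *)

Section Symmetry.
Variables (T : finType) (e : rel T).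
Hypothesis e_sym : symmetric e.

Lemma walk_len_sym (u v : T) k : walk_len e u v k -> walk_len e v u k.
Proof.
case/existsP=> p /andP[e_p /eqP p_v]; apply/existsP.
have size_p : size (rev (belast u p)) == k by rewrite size_rev size_belast size_tuple.
exists (Tuple size_p); rewrite /= -p_v; apply/andP; split.
  by rewrite rev_path (eq_path (e' := e)) // => x y; rewrite e_sym.
by case: (tval p) => [|x q] //=; rewrite rev_cons last_rcons.
Qed.

Lemma is_dist_sym (u v : T) l : is_dist e u v l -> is_dist e v u l.
Proof.
case=> walk_uv short_uv; split; first exact: walk_len_sym.
by move=> k lt_kl; apply: contra (short_uv k lt_kl); apply: walk_len_sym.
Qed.

End Symmetry.

Section Cycle.
Variable m : nat.
Local Notation C := (@cycle_rel m).

Lemma cycle_rel_sym : symmetric C.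
Proof. by move=> x y; rewrite /cycle_rel orbC. Qed.

Lemma walk_len_cycle_shift l (u v : 'I_m) :
  (u + l) %% m = v -> walk_len C u v l.
Proof.
have m_gt0 : 0 < m by case: m u {v} => [[]|].
elim: l u => [|l IHl] u uv.
  by apply/existsP; exists [tuple]; apply/eqP/val_inj; rewrite /= -uv addn0 modn_small.
pose w : 'I_m := Ordinal (ltn_pmod u.+1 m_gt0).
have /IHl/existsP[p /andP[w_p p_v]] : (w + l) %% m = v by rewrite modnDml -uv addnS.
by apply/existsP; exists (cons_tuple w p); rewrite /= w_p p_v /cycle_rel eqxx.
Qed.

(* [b * (m - 1)] accounts for [b] backward steps without truncated subtraction. *)
Lemma cycle_path_last (p : seq 'I_m) (u : 'I_m) : path C u p ->
  exists a b, a + b = size p /\ val (last u p) = (u + a + b * (m - 1)) %% m.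
Proof.
elim: p u => [|w p IHp] u /=.
  by move=> _; exists 0, 0; rewrite mul0n !addn0 modn_small.
case/andP=> /orP[/eqP w_succ | /eqP u_succ] /IHp[a [b [ab_p ->]]].
  exists a.+1, b; split; first by rewrite addSn ab_p.
  by rewrite w_succ -!addnA modnDml; congr (_ %% _); lia.
exists a, b.+1; split; first by rewrite addnS ab_p.
have w_pred : val w = (u + (m - 1)) %% m.
  have lt_w := ltn_ord w.
  rewrite u_succ modnDml; have -> : w.+1 + (m - 1) = w + m by lia.
  by rewrite modnDr modn_small.
rewrite w_pred -!addnA modnDml mulSn; congr (_ %% _); lia.
Qed.

Lemma walk_len_cycle_short (u v : 'I_m) k : walk_len C u v k ->
  exists2 j, j <= k & (u + j) %% m = v \/ (v + j) %% m = u.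
Proof.
case/existsP=> p /andP[e_p /eqP p_v].
have [a [b [ab_k v_ab]]] := cycle_path_last e_p.
rewrite size_tuple in ab_k; rewrite p_v in v_ab.
have le_bm : b <= b * m by rewrite leq_pmulr // (leq_ltn_trans _ (ltn_ord u)).
case: (leqP b a) => [le_ba | lt_ab].
  exists (a - b); first lia.
  by left; rewrite v_ab -(modnMDl b); congr (_ %% _); rewrite mulnBr muln1; lia.
exists (b - a); first lia.
right; rewrite v_ab modnDml.
have -> : u + a + b * (m - 1) + (b - a) = b * m + u by rewrite mulnBr muln1; lia.
by rewrite modnMDl modn_small.
Qed.

Lemma is_dist_cycle_shift l (u v : 'I_m) : 2 * l <= m ->
  (u + l) %% m = v -> is_dist C u v l.
Proof.
move=> le_2l_m uv; split; first exact: walk_len_cycle_shift.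
move=> k lt_kl; apply/negP => /walk_len_cycle_short[j le_jk [uj | vj]].
  have : u + j == u + l %[mod m] by rewrite uj uv.
  rewrite eqn_modDl !modn_small; lia.
have : u + (l + j) == u + 0 %[mod m].
  by rewrite addn0 addnA -modnDml uv vj modn_small.
rewrite eqn_modDl mod0n modn_small; lia.
Qed.

Lemma is_dist_cycleP l (u v : 'I_m) : is_dist C u v l ->
  (u + l) %% m = v \/ (v + l) %% m = u.
Proof.
case=> /walk_len_cycle_short[j le_jl uv_j] short_uv.
suff /eqP <- : j == l by [].
rewrite eqn_leq le_jl leqNgt; apply/negP => lt_jl.
move: (short_uv j lt_jl); rewrite -[X in is_true X]negbK.
case: uv_j => [/walk_len_cycle_shift -> // | /walk_len_cycle_shift vu].
by rewrite (walk_len_sym cycle_rel_sym vu).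
Qed.

Definition cycle_sphere (v : 'I_m) (l : nat) : {set 'I_m} :=
  [set u : 'I_m | (u + l) %% m == v] :|: [set u : 'I_m | (v + l) %% m == u].

Lemma card_cycle_sphere v l : #|cycle_sphere v l| <= 2 - (l == 0).
Proof.
have card_le1 (P : pred 'I_m) : (forall x y, P x -> P y -> x = y) -> #|[set u | P u]| <= 1.
  by move=> P_eq; apply/card_le1_eqP => x y; rewrite !inE => Px Py; apply: P_eq Py Px.
have [-> | l_gt0] := posnP l.
  apply: leq_trans (card_le1 (pred1 v) _); last by move=> x y /eqP-> /eqP->.
  apply/subset_leq_card/subsetP => u; rewrite !inE !addn0 !modn_small //.
  by case/orP=> /eqP/val_inj->.
apply: (leq_trans (leq_card_setU _ _).1).
rewrite -[2 - _]/(1 + 1).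
apply: leq_add; apply: card_le1 => x y /eqP xv /eqP yv; apply: val_inj => /=.
  by apply/eqP; move: (eqxx (v : nat)); rewrite -{1}xv -yv eqn_modDr !modn_small.
by rewrite -xv -yv.
Qed.

Lemma ext_irr_dom_cycle_card (S : {set 'I_m}) lam :
  ext_irr_dom C S lam -> m < 2 * #|S|.
Proof.
case=> _ [[v0 S_v0 lam_v0] dom_all].
have cover_S : [set: 'I_m] \subset \bigcup_(v in S) cycle_sphere v (lam v).
  apply/subsetP => u _; have [v S_v /is_dist_cycleP uv] := dom_all u.
  apply/bigcupP; exists v => //; rewrite !inE.
  by case: uv => ->; rewrite eqxx ?orbT.
have card_cover :
    #|\bigcup_(v in S) cycle_sphere v (lam v)| <= \sum_(v in S) #|cycle_sphere v (lam v)|.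
  elim/big_ind2: _ => [|A1 n1 A2 n2 le1 le2|//]; first by rewrite cards0.
  exact: leq_trans (leq_card_setU _ _).1 (leq_add le1 le2).
have card_sum : \sum_(v in S) #|cycle_sphere v (lam v)| < 2 * #|S|.
  have card_v0 : #|cycle_sphere v0 (lam v0)| <= 1.
    by rewrite lam_v0; exact: card_cycle_sphere v0 0.
  rewrite (big_setD1 v0) //= (cardsD1 v0 S) S_v0 add1n mulnS -addSn.
  apply: leq_add card_v0 _; rewrite mulnC -sum_nat_const leq_sum // => v _.
  exact: leq_trans (card_cycle_sphere _ _) (leq_subr _ _).
have := leq_trans (subset_leq_card cover_S) card_cover.
rewrite cardsT card_ord; lia.
Qed.

Lemma ext_irr_dom_cycle_optimal (S : {set 'I_m}) lam :
  ext_irr_dom C S lam -> 2 * #|S|.-1 <= m -> optimal_ext_irr_dom C S lam.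
Proof.
move=> S_eid le_S_m; split=> // S' lam'.
move/ext_irr_dom_cycle_card/(leq_ltn_trans le_S_m); rewrite ltn_pmul2l //.
exact: leq_trans (leqSpred _).
Qed.

Lemma card_val_in (s : seq nat) : uniq s -> all (fun p => p < m) s ->
  #|[set x : 'I_m | val x \in s]| = size s.
Proof.
move=> s_uniq /allP s_lt; rewrite cardE -(size_map val).
apply/perm_size/uniq_perm; rewrite ?(map_inj_uniq val_inj) ?enum_uniq //.
move=> p; apply/mapP/idP => [[x] | s_p]; first by rewrite mem_enum inE => s_x ->.
by exists (Ordinal (s_lt p s_p)); rewrite ?mem_enum ?inE.
Qed.

(* [pos] lists the vertices labelled 0, 1, 2, ...; vertex [nth 0 pos l] covers
   the vertices at offset [l] on either side, which are at distance [l] since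
   [2 * l <= m]. *)
Definition cycle_eid_seq (pos : seq nat) : bool :=
  [&& uniq pos, all (fun p => p < m) pos, 2 * (size pos).-1 <= m &
   all (fun u => has (fun l => ((u + l) %% m == nth 0 pos l)
                            || ((nth 0 pos l + l) %% m == u)) (iota 0 (size pos)))
       (iota 0 m)].

Lemma cycle_eid_seq_ext_irr_dom (pos : seq nat) : 0 < m -> cycle_eid_seq pos ->
  ext_irr_dom C [set x : 'I_m | val x \in pos] (fun x => index (val x) pos).
Proof.
move=> m_gt0 /and4P[pos_uniq pos_lt le_pos_m /allP covered].
have nth_lt l : l < size pos -> nth 0 pos l < m.
  by move=> lt_l; apply: (allP pos_lt); apply: mem_nth.
split.
  move=> x y; rewrite !inE => pos_x pos_y eq_index; apply: val_inj.
  by rewrite -(nth_index 0 pos_x) -(nth_index 0 pos_y) eq_index.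
have pos_gt0 : 0 < size pos.
  have /hasP[l] := covered 0 ltac:(by rewrite mem_iota add0n m_gt0).
  by rewrite mem_iota add0n => /andP[_ /(leq_ltn_trans (leq0n l))].
split.
  exists (Ordinal (nth_lt 0 pos_gt0)); first by rewrite inE /= mem_nth.
  by rewrite /= index_uniq.
move=> u; have /hasP[l] := covered u ltac:(by rewrite mem_iota add0n ltn_ord).
rewrite mem_iota add0n => lt_l u_l.
exists (Ordinal (nth_lt l lt_l)); first by rewrite inE /= mem_nth.
rewrite /= index_uniq // /dominates.
have le_2l_m : 2 * l <= m by apply: leq_trans le_pos_m; rewrite leq_mul2l -ltnS prednK.
case/orP: u_l => /eqP u_l; first exact: is_dist_cycle_shift.
exact/(is_dist_sym cycle_rel_sym)/is_dist_cycle_shift.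
Qed.

Lemma cycle_eid_seq_optimal (pos : seq nat) : 0 < m -> cycle_eid_seq pos ->
  exists (S : {set 'I_m}) (lam : 'I_m -> nat), optimal_ext_irr_dom C S lam.
Proof.
move=> m_gt0 pos_eid; have S_eid := cycle_eid_seq_ext_irr_dom m_gt0 pos_eid.
exists [set x : 'I_m | val x \in pos], (fun x => index (val x) pos).
apply: ext_irr_dom_cycle_optimal S_eid _.
by case/and4P: pos_eid => pos_uniq pos_lt le_pos_m _; rewrite card_val_in.
Qed.

End Cycle.

(* Entry [n] lists the vertices of C_(2n) labelled 0, 1, ..., n; the other entries are empty. *)
Definition cycle_eid_table : seq (seq nat) := [::
  [::];
  [::];
  [::];
  [::];
  [::];
  [::];
  [::];
  [:: 1; 4; 6; 10; 2; 5; 3; 9];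
  [::];
  [::];
  [::];
  [:: 10; 15; 1; 3; 5; 2; 21; 19; 16; 4; 8; 0];
  [::];
  [:: 14; 19; 13; 2; 5; 7; 10; 17; 15; 12; 3; 11; 20; 4];
  [::];
  [:: 3; 27; 2; 13; 18; 7; 0; 22; 17; 28; 11; 24; 29; 10; 4; 23];
  [::];
  [:: 7; 28; 33; 15; 19; 14; 5; 3; 13; 23; 12; 27; 25; 4; 6; 9; 24; 17];
  [::];
  [:: 0; 34; 10; 16; 27; 15; 23; 14; 35; 31; 24; 17; 4; 11; 18; 3; 25; 32; 19; 6];
  [::];
  [:: 36; 26; 0; 19; 14; 25; 6; 2; 39; 32; 38; 28; 20; 16; 35; 41; 8; 21; 37; 34; 13; 22];
  [::];
  [:: 1; 4; 29; 38; 26; 19; 3; 41; 25; 17; 35; 18; 27; 5; 42; 6; 16; 40; 34; 31; 39; 15; 20; 43];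
  [::];
  [:: 43; 8; 27; 36; 4; 10; 12; 17; 3; 28; 2; 9; 40; 14; 49; 1; 15; 5; 35; 45; 24; 11; 19; 7; 47; 21];
  [::];
  [:: 29; 13; 35; 39; 48; 45; 15; 11; 40; 25; 1; 6; 19; 28; 42; 20; 38; 10; 37; 4; 26; 46; 21; 7; 27; 49; 36; 53];
  [::];
  [:: 12; 41; 8; 34; 55; 16; 22; 32; 49; 17; 40; 56; 31; 36; 3; 19; 30; 44; 4; 37; 0; 15; 51; 25; 29; 57; 39; 27; 5; 26];
  [::];
  [:: 52; 0; 19; 59; 6; 14; 18; 42; 40; 38; 36; 17; 30; 2; 45; 51; 54; 33; 58; 39; 13; 16; 47; 4; 15; 48; 8; 57; 26; 12; 35; 44];
  [::];
  [:: 48; 51; 2; 42; 55; 28; 32; 34; 4; 27; 59; 18; 23; 11; 3; 17; 41; 57; 38; 61; 8; 13; 0; 53; 43; 56; 20; 26; 44; 50; 7; 40; 29; 14];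
  [::];
  [:: 28; 25; 60; 11; 57; 50; 27; 39; 1; 45; 54; 41; 63; 3; 17; 35; 64; 24; 16; 66; 47; 8; 59; 65; 46; 68; 61; 29; 67; 30; 36; 43; 51; 32; 4; 14];
  [::];
  [:: 68; 22; 10; 54; 9; 27; 55; 36; 46; 39; 1; 44; 8; 29; 48; 13; 11; 18; 7; 69; 72; 57; 25; 60; 34; 64; 33; 71; 45; 31; 70; 62; 14; 12; 40; 32; 28; 4];
  [::];
  [:: 31; 27; 18; 33; 6; 62; 5; 47; 51; 72; 54; 26; 53; 73; 52; 12; 55; 66; 69; 43; 38; 35; 57; 76; 49; 21; 58; 34; 41; 23; 77; 64; 2; 45; 11; 7; 40; 60; 30; 61];
  [::];
  [:: 26; 18; 1; 11; 66; 59; 49; 64; 45; 36; 22; 39; 37; 23; 16; 44; 57; 69; 33; 79; 3; 42; 55; 21; 63; 10; 50; 47; 41; 60; 52; 15; 29; 7; 24; 53; 32; 38; 4; 77; 51; 6];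
  [::];
  [:: 76; 38; 61; 28; 73; 4; 22; 0; 58; 56; 48; 24; 72; 85; 3; 30; 8; 25; 71; 13; 26; 35; 40; 84; 6; 9; 70; 63; 55; 14; 79; 51; 20; 34; 39; 46; 69; 78; 16; 1; 11; 67; 44; 12];
  [::];
  [:: 8; 78; 41; 86; 16; 32; 15; 38; 43; 84; 76; 29; 70; 36; 39; 75; 68; 47; 88; 55; 27; 71; 33; 65; 80; 53; 50; 6; 10; 42; 89; 37; 49; 28; 60; 45; 51; 4; 57; 85; 72; 13; 25; 1; 19; 46];
  [::];
  [:: 8; 68; 3; 28; 33; 43; 64; 66; 55; 32; 86; 39; 5; 88; 91; 45; 2; 49; 15; 87; 14; 61; 67; 84; 59; 78; 25; 89; 24; 50; 34; 23; 81; 76; 21; 62; 56; 83; 1; 17; 31; 77; 42; 57; 60; 29; 90; 18];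
  [::];
  [:: 23; 82; 62; 47; 29; 51; 15; 59; 35; 11; 79; 5; 20; 54; 96; 34; 22; 88; 80; 84; 31; 76; 9; 12; 66; 43; 87; 30; 67; 57; 7; 71; 4; 63; 44; 64; 18; 95; 55; 52; 19; 6; 32; 69; 40; 0; 27; 25; 72; 97];
  [::];
  [:: 23; 16; 31; 95; 70; 82; 13; 6; 81; 44; 52; 86; 67; 73; 2; 37; 79; 11; 65; 29; 41; 90; 62; 91; 48; 51; 56; 18; 78; 100; 9; 28; 38; 77; 17; 92; 1; 83; 27; 39; 60; 75; 98; 45; 36; 88; 8; 96; 59; 85; 53; 7];
  [::];
  [:: 13; 88; 49; 46; 37; 63; 67; 71; 40; 10; 45; 48; 42; 89; 11; 8; 76; 101; 62; 50; 19; 83; 28; 43; 14; 20; 3; 94; 105; 103; 64; 41; 39; 24; 36; 44; 16; 51; 84; 95; 58; 65; 53; 22; 66; 30; 54; 34; 5; 33; 92; 72; 57; 93];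
  [::];
  [:: 23; 55; 93; 61; 25; 73; 11; 4; 59; 34; 75; 13; 3; 22; 6; 19; 43; 92; 98; 38; 68; 82; 91; 54; 8; 14; 102; 60; 78; 9; 74; 41; 39; 33; 62; 18; 72; 89; 51; 2; 30; 81; 50; 12; 16; 107; 17; 77; 35; 37; 24; 96; 53; 79; 103; 101];
  [::];
  [:: 103; 110; 27; 19; 78; 92; 106; 45; 85; 81; 66; 1; 33; 14; 5; 58; 49; 47; 99; 23; 55; 13; 72; 32; 75; 36; 44; 64; 30; 91; 108; 54; 89; 20; 62; 9; 83; 73; 51; 53; 40; 104; 82; 112; 16; 26; 61; 93; 65; 97; 34; 71; 101; 6; 48; 24; 10; 111];
  [::];
  [:: 105; 44; 104; 57; 42; 37; 56; 26; 82; 67; 117; 5; 83; 17; 86; 0; 41; 61; 102; 92; 69; 89; 77; 1; 27; 15; 87; 40; 65; 50; 95; 51; 85; 114; 2; 31; 47; 4; 90; 30; 96; 63; 59; 106; 3; 73; 52; 45; 75; 108; 76; 24; 100; 88; 33; 25; 8; 58; 72; 35];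
  [::];
  [:: 69; 65; 37; 70; 99; 87; 116; 84; 9; 38; 8; 48; 97; 32; 112; 36; 90; 7; 31; 98; 43; 55; 109; 73; 105; 53; 81; 59; 86; 11; 91; 74; 115; 27; 12; 83; 63; 4; 18; 49; 102; 34; 95; 51; 80; 20; 114; 5; 60; 106; 21; 82; 2; 58; 16; 46; 72; 79; 61; 89; 104; 29];
  [::];
  [:: 46; 1; 22; 63; 55; 83; 23; 19; 81; 72; 107; 118; 113; 28; 41; 10; 20; 99; 61; 51; 36; 85; 89; 0; 76; 87; 14; 58; 82; 98; 101; 44; 26; 12; 31; 33; 6; 43; 75; 96; 54; 49; 91; 65; 120; 38; 4; 39; 24; 60; 124; 47; 25; 106; 93; 90; 117; 35; 102; 77; 27; 30; 92; 52];
  [::];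
  [:: 48; 66; 52; 122; 103; 32; 124; 37; 55; 60; 113; 7; 27; 74; 98; 86; 118; 93; 15; 79; 94; 0; 75; 29; 31; 61; 2; 51; 30; 120; 111; 25; 63; 59; 43; 33; 6; 38; 83; 20; 128; 5; 104; 53; 36; 44; 71; 117; 1; 24; 40; 65; 81; 85; 89; 95; 97; 9; 115; 76; 82; 3; 17; 41; 49; 28];
  [::];
  [:: 44; 132; 128; 12; 35; 15; 84; 115; 93; 86; 36; 80; 54; 49; 123; 79; 103; 90; 121; 5; 10; 77; 119; 48; 57; 68; 109; 129; 23; 133; 122; 130; 8; 4; 21; 18; 27; 43; 108; 88; 42; 91; 26; 102; 16; 22; 69; 25; 28; 114; 125; 33; 6; 98; 101; 34; 113; 111; 3; 107; 112; 13; 66; 71; 83; 31; 82; 56];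
  [::];
  [:: 19; 54; 45; 111; 91; 98; 28; 18; 107; 48; 25; 12; 71; 78; 84; 57; 135; 62; 89; 59; 10; 29; 5; 86; 121; 113; 58; 33; 3; 46; 124; 116; 73; 36; 20; 39; 82; 11; 52; 101; 4; 117; 75; 34; 81; 37; 43; 85; 32; 110; 23; 115; 15; 134; 66; 13; 80; 53; 109; 47; 96; 87; 128; 41; 69; 27; 65; 56; 126; 17];
  [::];
  [:: 23; 16; 97; 110; 74; 50; 118; 49; 89; 68; 72; 138; 25; 6; 128; 1; 77; 63; 46; 70; 83; 111; 10; 17; 91; 28; 47; 75; 115; 7; 101; 80; 124; 8; 117; 61; 130; 116; 122; 36; 79; 113; 127; 134; 3; 21; 106; 39; 73; 5; 58; 18; 96; 84; 56; 120; 85; 48; 42; 133; 65; 119; 60; 131; 121; 11; 40; 71; 55; 103; 92; 33];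
  [::];
  [:: 27; 100; 59; 38; 134; 17; 7; 113; 145; 19; 87; 84; 78; 47; 107; 126; 101; 14; 74; 91; 135; 112; 58; 71; 133; 8; 81; 98; 144; 142; 23; 12; 119; 65; 92; 54; 104; 99; 37; 24; 42; 111; 63; 80; 52; 34; 120; 5; 86; 79; 4; 68; 138; 49; 11; 114; 28; 140; 20; 73; 136; 3; 131; 61; 106; 110; 1; 82; 117; 45; 116; 75; 90; 39];
  [::];
  [:: 27; 108; 65; 91; 8; 50; 3; 26; 22; 101; 71; 60; 110; 124; 64; 49; 81; 119; 88; 115; 57; 96; 25; 16; 107; 78; 140; 146; 121; 6; 55; 9; 54; 15; 24; 89; 87; 141; 129; 126; 139; 130; 17; 31; 106; 111; 59; 147; 68; 11; 132; 69; 93; 95; 90; 35; 125; 103; 43; 70; 133; 19; 33; 52; 143; 48; 122; 1; 73; 77; 72; 47; 79; 149; 100; 127];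
  [::];
  [:: 27; 141; 151; 144; 102; 2; 30; 153; 107; 112; 90; 134; 61; 125; 103; 24; 86; 76; 38; 33; 96; 83; 45; 60; 41; 145; 69; 8; 26; 115; 42; 142; 12; 63; 116; 123; 82; 111; 72; 40; 10; 6; 71; 84; 136; 85; 14; 128; 106; 133; 75; 34; 5; 0; 131; 9; 101; 135; 109; 67; 126; 36; 47; 124; 4; 25; 77; 89; 1; 140; 21; 146; 87; 91; 122; 53; 55; 59];
  [::];
  [:: 16; 137; 125; 48; 111; 70; 42; 87; 153; 63; 39; 2; 96; 54; 116; 45; 130; 17; 74; 98; 73; 22; 143; 75; 128; 88; 100; 139; 67; 18; 120; 151; 157; 134; 122; 5; 118; 142; 53; 105; 24; 1; 99; 66; 147; 65; 117; 29; 86; 34; 82; 121; 79; 6; 154; 32; 114; 76; 102; 30; 77; 0; 124; 56; 89; 13; 7; 57; 136; 95; 92; 68; 141; 84; 12; 93; 40; 4; 115; 156];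
  [::];
  [:: 101; 146; 78; 117; 86; 58; 112; 82; 3; 114; 143; 1; 21; 124; 72; 69; 65; 110; 37; 46; 41; 104; 93; 27; 18; 5; 26; 99; 141; 136; 129; 17; 153; 121; 126; 22; 15; 42; 39; 107; 118; 103; 145; 24; 91; 83; 56; 144; 16; 11; 19; 40; 67; 140; 80; 57; 73; 79; 92; 14; 95; 77; 8; 33; 138; 111; 43; 161; 100; 47; 30; 130; 108; 97; 87; 131; 9; 105; 20; 120; 125; 29];
  [::];
  [:: 141; 96; 162; 91; 109; 55; 9; 23; 36; 121; 124; 92; 87; 164; 5; 49; 37; 75; 56; 143; 82; 62; 145; 156; 113; 34; 93; 24; 70; 51; 114; 78; 138; 123; 15; 83; 161; 106; 104; 4; 46; 120; 59; 97; 67; 100; 26; 10; 158; 33; 85; 142; 160; 79; 66; 84; 80; 6; 110; 115; 99; 94; 3; 63; 14; 20; 27; 50; 105; 31; 0; 81; 86; 98; 30; 136; 163; 76; 60; 155; 157; 117; 102; 71];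
  [::];
  [:: 105; 50; 141; 118; 62; 89; 22; 94; 127; 51; 66; 143; 160; 117; 33; 25; 134; 52; 128; 45; 24; 2; 10; 44; 3; 139; 137; 168; 98; 59; 15; 153; 113; 111; 125; 81; 32; 99; 60; 68; 73; 138; 47; 97; 144; 57; 155; 129; 5; 122; 9; 116; 72; 39; 150; 154; 106; 95; 19; 26; 101; 164; 119; 115; 11; 63; 103; 67; 92; 56; 38; 142; 14; 145; 46; 78; 71; 13; 1; 4; 43; 96; 162; 100; 147; 121];
  [::];
  [:: 59; 114; 147; 115; 79; 131; 110; 40; 167; 91; 157; 74; 28; 75; 137; 54; 105; 151; 125; 53; 47; 171; 42; 117; 24; 16; 127; 104; 158; 57; 25; 126; 134; 106; 36; 149; 112; 34; 166; 71; 98; 27; 99; 56; 128; 136; 81; 152; 168; 80; 161; 1; 148; 72; 107; 35; 37; 62; 145; 97; 49; 76; 84; 155; 100; 163; 132; 66; 38; 119; 113; 120; 60; 7; 78; 4; 82; 45; 39; 2; 154; 89; 138; 94; 135; 150; 109; 165];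
  [::];
  [:: 32; 139; 145; 8; 152; 22; 19; 72; 122; 75; 41; 99; 70; 83; 29; 71; 174; 86; 65; 116; 146; 21; 55; 157; 147; 171; 35; 2; 25; 5; 120; 54; 48; 59; 73; 110; 77; 135; 177; 34; 85; 63; 82; 7; 144; 3; 106; 46; 33; 68; 112; 43; 170; 131; 74; 161; 52; 111; 107; 133; 31; 163; 98; 1; 23; 66; 49; 9; 140; 58; 94; 62; 79; 39; 102; 138; 53; 18; 11; 42; 101; 149; 153; 150; 38; 16; 13; 95; 69; 148];
  [::];
  [:: 123; 167; 70; 150; 1; 140; 52; 82; 21; 30; 35; 96; 162; 105; 138; 42; 112; 116; 87; 7; 180; 141; 15; 107; 119; 76; 106; 36; 157; 126; 91; 158; 110; 55; 127; 69; 66; 103; 4; 83; 152; 122; 29; 39; 11; 153; 155; 134; 31; 49; 9; 62; 128; 120; 10; 104; 159; 168; 73; 3; 175; 171; 63; 95; 178; 79; 136; 90; 22; 121; 147; 23; 146; 156; 139; 148; 100; 133; 13; 85; 97; 5; 37; 17; 88; 54; 98; 59; 142; 78; 130; 65];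
  [::];
  [:: 39; 119; 98; 144; 12; 65; 80; 70; 57; 154; 174; 17; 26; 146; 181; 150; 66; 78; 99; 103; 24; 122; 37; 14; 116; 183; 27; 44; 51; 58; 6; 74; 143; 52; 163; 93; 90; 117; 83; 2; 75; 35; 131; 107; 29; 161; 77; 21; 126; 155; 149; 102; 3; 85; 137; 121; 53; 50; 40; 54; 43; 109; 166; 125; 97; 25; 76; 47; 71; 138; 18; 4; 139; 120; 108; 168; 15; 133; 19; 106; 30; 67; 176; 48; 28; 23; 112; 45; 128; 89; 142; 61; 63; 9];
  [::];
  [:: 139; 60; 52; 174; 1; 29; 110; 18; 138; 99; 77; 87; 140; 147; 26; 126; 58; 150; 67; 37; 173; 136; 100; 74; 51; 107; 168; 186; 122; 180; 113; 39; 179; 15; 103; 27; 125; 163; 93; 123; 152; 0; 133; 50; 81; 146; 20; 118; 158; 141; 49; 137; 176; 159; 101; 9; 92; 166; 177; 162; 187; 57; 106; 170; 90; 185; 119; 12; 88; 97; 53; 148; 45; 169; 155; 54; 69; 61; 24; 184; 175; 144; 32; 96; 164; 91; 95; 117; 134; 189; 80; 22; 86; 165; 111; 63];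
  [::];
  [:: 188; 169; 192; 104; 53; 153; 80; 158; 85; 108; 126; 83; 68; 79; 17; 130; 74; 43; 71; 123; 19; 11; 51; 152; 161; 100; 148; 69; 7; 176; 101; 150; 86; 88; 31; 10; 14; 39; 47; 28; 84; 154; 46; 59; 95; 55; 6; 61; 116; 181; 156; 171; 89; 99; 76; 124; 54; 34; 20; 118; 52; 102; 25; 103; 112; 135; 149; 151; 27; 57; 9; 91; 87; 134; 138; 30; 5; 26; 141; 35; 107; 65; 15; 145; 50; 128; 94; 48; 111; 187; 137; 98; 36; 131; 67; 45; 13; 114];
  [::];
  [:: 19; 122; 148; 6; 176; 184; 29; 123; 107; 104; 51; 75; 94; 85; 25; 43; 53; 5; 8; 164; 182; 173; 183; 77; 1; 18; 103; 129; 80; 170; 81; 185; 111; 71; 178; 101; 112; 163; 132; 186; 27; 125; 162; 35; 166; 118; 86; 181; 9; 82; 47; 100; 22; 140; 159; 102; 147; 119; 138; 34; 105; 131; 78; 20; 110; 175; 52; 120; 41; 165; 90; 10; 56; 180; 95; 58; 190; 169; 57; 150; 21; 7; 172; 115; 113; 4; 26; 38; 54; 69; 193; 151; 61; 168; 128; 24; 161; 114; 108; 149]].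

Lemma cycle_eid_table_ok :
  all (fun n => odd n && (n != 9) ==> cycle_eid_seq (2 * n) (nth [::] cycle_eid_table n))
      (iota 7 93).
Proof. by vm_compute. Qed.

Theorem corollary4p10 (n : nat) :
  odd n -> 7 <= n <= 99 -> n != 9 ->
  exists (S : {set 'I_(2 * n)}) (lam : 'I_(2 * n) -> nat),
    optimal_ext_irr_dom (@cycle_rel (2 * n)) S lam.
Proof.
move=> odd_n /andP[ge7_n le99_n] ne9_n.
apply: (cycle_eid_seq_optimal (pos := nth [::] cycle_eid_table n)); first lia.
have /implyP := allP cycle_eid_table_ok n ltac:(by rewrite mem_iota; lia).
by rewrite odd_n ne9_n; apply.
Qed.
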